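(* If $G$ is a connected $(C_4,\text{diamond})$-free graph and $1\le k\le|V(G)|-1$, then $F_k(G)$ is a prime graph.
   Context: $F_k(G)$ is the graph on the $k$-subsets of $V(G)$ with $A,B$ adjacent iff $A\triangle B$ is an edge of $G$. A diamond is $K_4$ minus an edge; $(C_4,\text{diamond})$-free means no induced $4$-cycle and no induced diamond. A graph is composite if it is isomorphic to the Cartesian product of two or more nontrivial graphs, and prime otherwise. *)

From mathcomp Require Import all_boot.
Set Implicit Arguments. Unset Strict Implicit. Unset Printing Implicit Defensive.

Definition simple_graph (V : finType) (e : rel V) : Prop :=
  symmetric e /\ irreflexive e.

Definition connected_graph (V : finType) (e : rel V) : Prop :=
  forall x y : V, connect e x y.

Definition has_induced_C4 (V : finType) (e : rel V) : Prop :=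
  exists a b c d : V,
    uniq [:: a; b; c; d] /\
    e a b /\ e b c /\ e c d /\ e d a /\ ~~ e a c /\ ~~ e b d.

Definition has_induced_diamond (V : finType) (e : rel V) : Prop :=
  exists a b c d : V,
    uniq [:: a; b; c; d] /\
    e a b /\ e a c /\ e a d /\ e b c /\ e b d /\ ~~ e c d.

Definition C4_diamond_free (V : finType) (e : rel V) : Prop :=
  ~ has_induced_C4 e /\ ~ has_induced_diamond e.

(* k-token graph F_k(G): vertices are the k-subsets of V(G);
   A ~ B iff the symmetric difference of A and B is an edge of G *)
Definition tokens (V : finType) (k : nat) := {A : {set V} | #|A| == k}.

Definition token_rel (V : finType) (e : rel V) (k : nat) : rel (tokens V k) :=
  fun A B => [exists x : V, exists y : V,
      e x y && (((val A :\: val B) :|: (val B :\: val A)) == [set x; y])].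

Definition cart_rel (V1 V2 : finType) (e1 : rel V1) (e2 : rel V2) : rel (V1 * V2) :=
  fun p q => ((p.1 == q.1) && e2 p.2 q.2) || ((p.2 == q.2) && e1 p.1 q.1).

(* composite: isomorphic to a Cartesian product of two nontrivial graphs
   (a product of two or more nontrivial graphs can always be grouped into
   a product of two nontrivial graphs, so this is equivalent) *)
Definition composite (V : finType) (e : rel V) : Prop :=
  exists (V1 V2 : finType) (e1 : rel V1) (e2 : rel V2),
    simple_graph e1 /\ simple_graph e2 /\ 1 < #|V1| /\ 1 < #|V2| /\
    exists f : V -> V1 * V2, bijective f /\
      forall x y : V, e x y = cart_rel e1 e2 (f x) (f y).

Definition prime_graph (V : finType) (e : rel V) : Prop := ~ composite e.
Arguments token_rel {V} e k _ _.

From mathcomp Require Import all_boot.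
Set Implicit Arguments. Unset Strict Implicit. Unset Printing Implicit Defensive.

(* Suppose F_k(G) were isomorphic to a product H1 x H2, and colour every edge of
   F_k(G) by the factor along which it moves.  In a Cartesian product two edges
   at a vertex with different colours span a square, and opposite edges of a
   square have the same colour.
   In F_k(G), a square spanned by two token moves at P that share their source
   (or their target) in G would give two nonadjacent vertices of G with two
   common neighbours, i.e. an induced C4 or diamond; so such moves have the same
   colour.  Two moves along disjoint edges st and xy span a square, so a pair of
   differently coloured moves at P survives at P - s + t with s and t exchanged;
   together with the first fact this lets an endpoint of st slide along any edge
   of G.  Sliding it along a path of G from s to x makes the two moves share an
   endpoint, a contradiction.  Hence the edges at each token have one colour,
   and as F_k(G) is connected all edges do; then one coordinate is constant on
   F_k(G), impossible when both factors are nontrivial. *)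

Lemma connect_invariant (T : finType) (r : rel T) (I : T -> Prop) x y :
  (forall u w, I u -> r u w -> I w) -> connect r x y -> I x -> I y.
Proof.
move=> Ir /connectP [p + ->]; elim: p x => //= w p IH x /andP [rxw pw] Ix.
exact: IH pw (Ir _ _ Ix rxw).
Qed.

Section Swap.
Variable V : finType.
Implicit Types (A B C Q R S : {set V}) (x y z : V).

Definition swap A B x y :=
  [/\ x \in A, x \notin B, y \in B, y \notin A &
      forall z, z != x -> z != y -> (z \in A) = (z \in B)].

Lemma in_swap A B x y z : swap A B x y ->
  (z \in B) = (z == y) || (z != x) && (z \in A).
Proof.
case=> _ xB yB _ AB.
case: (eqVneq z y) => [->|zy] //=; case: (eqVneq z x) => [->|zx] /=.
  exact: negbTE.
by rewrite AB.
Qed.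

Lemma swapI A B x y : x \in A -> y \notin A ->
  (forall z, (z \in B) = (z == y) || (z != x) && (z \in A)) -> swap A B x y.
Proof.
move=> xA yA inB; have xy : x != y by apply: contraTneq xA => ->.
split; rewrite ?inB ?eqxx ?(negbTE xy) //.
by move=> z zx zy; rewrite inB (negbTE zy) zx.
Qed.

Lemma swap_sym A B x y : swap A B x y -> swap B A y x.
Proof. by case=> xA xB yB yA AB; split=> // z zy zx; apply/esym/AB. Qed.

Lemma swap_setC A B x y : swap A B x y -> swap (~: A) (~: B) y x.
Proof.
case=> xA xB yB yA AB; split; rewrite ?inE ?negbK //.
by move=> z zy zx; rewrite !inE AB.
Qed.

Lemma swap_uniq A B C x y : swap A B x y -> swap A C x y -> B = C.
Proof. by move=> sB sC; apply/setP => z; rewrite (in_swap z sB) (in_swap z sC). Qed.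

Lemma swap_removed A B x y z : swap A B x y -> z \in A -> z \notin B -> z = x.
Proof.
by move=> sAB zA; rewrite (in_swap z sAB) zA andbT negb_or negbK => /andP [_ /eqP].
Qed.

Lemma swap_added A B x y z : swap A B x y -> z \notin A -> z \in B -> z = y.
Proof. by move=> sAB zA; rewrite (in_swap z sAB) (negbTE zA) andbF orbF => /eqP. Qed.

Lemma swap_trans A B C x y z : swap A B x y -> swap B C y z -> z != x -> swap A C x z.
Proof.
move=> sB sC zx; have [xA _ _ yA _] := sB; have [_ _ _ zB _] := sC.
have zA : z \notin A by move: zB; rewrite (in_swap z sB) zx /= negb_or => /andP [].
apply: swapI => // w; rewrite (in_swap w sC) (in_swap w sB).
by case: (eqVneq w y) => [->|] //=; rewrite (negbTE yA) !andbF.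
Qed.

Lemma swap_same_src A Q R x y y' :
  swap A Q x y -> swap A R x y' -> y != y' -> swap Q R y y'.
Proof.
move=> sQ sR yy'; have [_ _ yQ yA _] := sQ; have [_ _ _ y'A _] := sR.
apply: swapI => [//||z].
  by rewrite (in_swap y' sQ) eq_sym (negbTE yy') (negbTE y'A) andbF.
rewrite (in_swap z sR) (in_swap z sQ).
by case: (eqVneq z y) => [->|] //=; rewrite (negbTE yA) andbF.
Qed.

Lemma swap_same_tgt A Q R x x' y :
  swap A Q x y -> swap A R x' y -> x != x' -> swap Q R x' x.
Proof.
move=> sQ sR xx'.
rewrite -[Q]setCK -[R]setCK; apply: swap_setC.
exact: swap_same_src (swap_setC sQ) (swap_setC sR) xx'.
Qed.

Lemma swap_square A Q R R' s t x y : swap A Q s t -> swap A R x y ->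
  swap Q R' x y -> s != x -> t != y -> swap R R' s t.
Proof.
move=> sQ sR sR' sx ty; have [sA _ _ tA _] := sQ; have [xA _ _ yA _] := sR.
have sy : s != y by apply: contraTneq sA => ->.
have tx : t != x by apply: contraNneq tA => ->.
apply: swapI => [|| z].
- by rewrite (in_swap s sR) sx sA andbT orbT.
- by rewrite (in_swap t sR) (negbTE ty) (negbTE tA) andbF.
rewrite (in_swap z sR') (in_swap z sQ) (in_swap z sR).
case: (eqVneq z y) => [->|_] /=.
  by rewrite (eq_sym y s) sy orbT.
by case: (eqVneq z x) => [->|//] /=; rewrite (eq_sym x t) (negbTE tx) andbF.
Qed.

Lemma symdiff2_swap A B x y : #|A| = #|B| -> x != y ->
  (A :\: B) :|: (B :\: A) = [set x; y] -> swap A B x y \/ swap A B y x.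
Proof.
wlog xA : A B / x \in A.
  move=> W cAB xy D; have [xA|xA] := boolP (x \in A); first exact: W.
  have xB : x \in B.
    by move/setP/(_ x): D; rewrite !inE eqxx (negbTE xA) andbF.
  rewrite setUC in D.
  by case: (W B A xB (esym cAB) xy D) => /swap_sym; [right | left].
move=> cAB xy D.
have inD z : ((z \in A) != (z \in B)) = (z \in [set x; y]).
  by rewrite -D !inE; case: (z \in A); case: (z \in B).
have xB : x \notin B by move: (inD x); rewrite !inE eqxx xA; case: (x \in B).
have same z : z != x -> z != y -> (z \in A) = (z \in B).
  by move=> zx zy; apply/eqP/negPn; rewrite inD !inE (negbTE zx) (negbTE zy).
have [yA|yA] := boolP (y \in A).
  have yB : y \notin B by move: (inD y); rewrite !inE eqxx orbT yA; case: (y \in B).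
  have BA : B \subset A.
    apply/subsetP => z zB; have [-> //|zx] := eqVneq z x.
    by have [-> //|zy] := eqVneq z y; rewrite same.
  have /eqP eqBA : B == A by rewrite eqEcard BA cAB leqnn.
  by rewrite eqBA xA in xB.
have yB : y \in B by move: (inD y); rewrite !inE eqxx orbT (negbTE yA); case: (y \in B).
by left; split.
Qed.

End Swap.

Section FreeGraph.
Variables (V : finType) (e : rel V).
Hypotheses (e_sym : symmetric e) (e_irr : irreflexive e) (e_free : C4_diamond_free e).
Implicit Types (A Q R S : {set V}) (x y z : V).

Lemma edge_neq x y : e x y -> x != y.
Proof. by apply: contraTneq => ->; rewrite e_irr. Qed.

Lemma common_neighbour_uniq x w y y' : y != y' -> ~~ e y y' ->
  e x y -> e x y' -> e w y -> e w y' -> x = w.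
Proof.
move=> yy' nyy' exy exy' ewy ewy'; apply/eqP/negPn/negP => xw.
have [noC4 noDiamond] := e_free.
have [exw|nexw] := boolP (e x w).
- apply: noDiamond; exists x, w, y, y'.
  by rewrite /= !inE !negb_or xw yy' !edge_neq.
- apply: noC4; exists x, y, w, y'.
  by rewrite /= !inE !negb_or xw yy' !edge_neq ?(e_sym y w) ?(e_sym y' x).
Qed.

Lemma swap_common_neighbour_src A Q R S x y y' a b c d :
  swap A Q x y -> swap A R x y' -> y != y' -> ~~ e y y' -> e x y -> e x y' ->
  swap Q S a b -> e a b -> swap S R c d -> e c d -> S = A.
Proof.
move=> sQ sR yy' nyy' exy exy' sQS eab sSR ecd.
have sQR := swap_same_src sQ sR yy'.
have [_ xQ yQ _ _] := sQ; have [_ _ y'R _ _] := sR; have [aQ aS bS bQ _] := sQS.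
have [ay | ay] := eqVneq a y.
  subst a.
  have [bx | bx] := eqVneq b x; first by subst b; exact: swap_uniq sQS (swap_sym sQ).
  have by' : b != y' by apply: contraNneq nyy' => <-.
  have bR : b \notin R by rewrite (in_swap b sQR) (negbTE by') (negbTE bQ) andbF.
  have [_ _ _ y'Q _] := sQR.
  have y'S : y' \notin S.
    by rewrite (in_swap y' sQS) eq_sym (negbTE by') (negbTE y'Q) andbF.
  have bc := swap_removed sSR bS bR; have y'd := swap_added sSR y'S y'R; subst c d.
  case/negP: bx; apply/eqP/esym.
  by apply: common_neighbour_uniq yy' nyy' exy exy' _ ecd; rewrite e_sym.
have ax : a != x by apply: contraTneq aQ => ->.
have aA : a \in A by move: aQ; rewrite (in_swap a sQ) (negbTE ay) ax.
have yS : y \in S by rewrite (in_swap y sQS) (eq_sym y a) ay yQ orbT.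
have [_ yR _ _ _] := sQR.
have yc := swap_removed sSR yS yR; subst c.
have aR : a \in R by rewrite (in_swap a sR) ax aA orbT.
have ad := swap_added sSR aS aR; subst d.
have by_ : b != y by apply: contraNneq bQ => ->.
have bR : b \in R by rewrite (in_swap b sSR) by_ bS orbT.
have by' := swap_added sQR bQ bR; subst b.
case/negP: ax; apply/eqP/esym.
by apply: common_neighbour_uniq yy' nyy' exy exy' _ eab; rewrite e_sym.
Qed.

Lemma swap_common_neighbour_tgt A Q R S x x' y a b c d :
  swap A Q x y -> swap A R x' y -> x != x' -> ~~ e x x' -> e x y -> e x' y ->
  swap Q S a b -> e a b -> swap S R c d -> e c d -> S = A.
Proof.
move=> sQ sR xx' nxx' exy ex'y sQS eab sSR ecd; apply: setC_inj.
apply: (swap_common_neighbour_src (swap_setC sQ) (swap_setC sR) xx' nxx')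
  (swap_setC sQS) _ (swap_setC sSR) _; by rewrite e_sym.
Qed.
End FreeGraph.

Section CartesianProduct.
Variables (V1 V2 : finType) (e1 : rel V1) (e2 : rel V2).
Hypotheses (simple1 : simple_graph e1) (simple2 : simple_graph e2).
Local Notation cr := (cart_rel e1 e2).
Implicit Types p q r s : V1 * V2.

Lemma cart_relC p q : cr p q = cr q p.
Proof.
by rewrite /cart_rel (eq_sym p.1) (eq_sym p.2) (proj1 simple1 p.1) (proj1 simple2 p.2).
Qed.

Lemma cart_rel_fst p q : cr p q -> (p.1 == q.1) = (p.2 != q.2).
Proof.
case: p q => [p1 p2] [q1 q2]; rewrite /cart_rel /=.
have [<-|_] /= := eqVneq p1 q1; last by case/andP => /eqP ->; rewrite eqxx.
rewrite (proj2 simple1) andbF orbF => e2pq.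
by apply/esym; apply: contraTneq e2pq => ->; rewrite (proj2 simple2).
Qed.

Lemma cart_square_fst p q r s : cr p q -> cr q s -> cr r s -> cr p r ->
  p != s -> q != r -> (p.1 == r.1) = (q.1 == s.1).
Proof.
case: p q r s => [p1 p2] [q1 q2] [r1 r2] [s1 s2].
move=> /cart_rel_fst pq /cart_rel_fst qs /cart_rel_fst rs /cart_rel_fst pr /eqP ps /eqP qr.
move: pq qs rs pr => /=.
by repeat match goal with |- context [?a == ?b] => case: (@eqP _ a b) => ? end;
  try congruence.
Qed.

Lemma cart_corner_square p q r : cr p q -> cr p r -> (p.1 == q.1) != (p.1 == r.1) ->
  ~~ cr q r /\ exists2 s, s != p & cr q s && cr s r.
Proof.
wlog pq1 : q r / p.1 == q.1.
  move=> W pq pr hc; have [pq1|pq1] := boolP (p.1 == q.1); first exact: W.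
  have pr1 : p.1 == r.1 by move: hc; rewrite (negbTE pq1); case: (p.1 == r.1).
  have [nrq [s sp /andP [rs sq]]] := W r q pr1 pr pq ltac:(by rewrite pr1 (negbTE pq1)).
  split; first by rewrite cart_relC.
  by exists s; rewrite // cart_relC sq cart_relC rs.
case: p q r pq1 => [p1 p2] [q1 q2] [r1 r2] /= /eqP <- pq pr.
rewrite eqxx eq_sym eqb_id => pr1.
have pq2 : p2 != q2 by rewrite -(cart_rel_fst pq) eqxx.
have /eqP pr2 : p2 == r2 by move: (cart_rel_fst pr); rewrite (negbTE pr1) => /esym/negbFE.
subst r2.
have e2pq : e2 p2 q2.
  by move: pq; rewrite /cart_rel /= eqxx (proj2 simple1) andbF orbF.
have e1pr : e1 p1 r1 by move: pr; rewrite /cart_rel /= (negbTE pr1) eqxx.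
split.
  by rewrite /cart_rel /= (negbTE pr1) eq_sym (negbTE pq2).
exists (r1, q2); first by rewrite xpair_eqE negb_and eq_sym pr1.
by rewrite /cart_rel /= !eqxx e1pr (proj1 simple2) e2pq orbT.
Qed.
End CartesianProduct.

Section TokenGraph.
Variables (V : finType) (e : rel V) (k : nat).
Hypotheses (e_sym : symmetric e) (e_irr : irreflexive e).
Local Notation T := (tokens V k).
Local Notation h := (token_rel e k).
Implicit Types (P Q R S : T) (x y z : V).

Lemma token_card P : #|val P| = k.
Proof. exact/eqP/(valP P). Qed.

Lemma token_relE P Q : h P Q -> exists x y, e x y /\ swap (val P) (val Q) x y.
Proof.
case/existsP=> x /existsP [y /andP [exy /eqP D]].
have cPQ : #|val P| = #|val Q| by rewrite !token_card.
have [sxy|syx] := symdiff2_swap cPQ (edge_neq e_irr exy) D; first by exists x, y.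
by exists y, x; rewrite e_sym.
Qed.

Lemma token_relI P Q x y : e x y -> swap (val P) (val Q) x y -> h P Q.
Proof.
move=> exy sPQ; have [xP _ _ yP _] := sPQ.
apply/existsP; exists x; apply/existsP; exists y; rewrite exy andTb.
apply/eqP/setP => z; rewrite !inE (in_swap z sPQ).
case: (eqVneq z y) => [->|zy]; first by rewrite !orTb !orbT yP.
by case: (eqVneq z x) => [->|zx] /=; [rewrite xP | case: (z \in val P)].
Qed.

Lemma token_relC : symmetric h.
Proof.
suff hC P Q : h P Q -> h Q P by move=> P Q; apply/idP/idP; apply: hC.
case/token_relE=> x [y [exy sPQ]]; apply: token_relI (swap_sym sPQ).
by rewrite e_sym.
Qed.

Lemma exists_swap P x y : x \in val P -> y \notin val P ->
  exists Q, swap (val P) (val Q) x y.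
Proof.
move=> xP yP; have cardQ : #|y |: (val P :\ x)| == k.
  apply/eqP; rewrite cardsU1 !inE (negbTE yP) andbF.
  by rewrite -[RHS](token_card P) (cardsD1 x (val P)) xP.
exists (exist (fun A : {set V} => #|A| == k) _ cardQ).
by apply: swapI => // z; rewrite !inE.
Qed.

Lemma connect_swap (p : seq V) a P : path e a p ->
  a \in val P -> last a p \notin val P ->
  exists2 Q, swap (val P) (val Q) a (last a p) & connect h P Q.
Proof.
elim: p a P => [|w p IH] a P /=; first by move=> _ ->.
case/andP=> eaw pw aP; set b := last w p => bP.
have aw := edge_neq e_irr eaw.
have ab : a != b by apply: contraTneq aP => ->.
have [wP|wP] := boolP (w \in val P).
  have [Q1 sQ1 cQ1] := IH w P pw wP bP.
  have aQ1 : a \in val Q1 by rewrite (in_swap a sQ1) aw aP orbT.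
  have [_ wQ1 _ _ _] := sQ1.
  have [Q2 sQ2] := exists_swap aQ1 wQ1.
  exists Q2; last exact: connect_trans cQ1 (connect1 (token_relI eaw sQ2)).
  apply: swapI => // z; rewrite (in_swap z sQ2) (in_swap z sQ1).
  case: (eqVneq z w) => [->|_] /=; first by rewrite (eq_sym w a) aw wP orbT.
  by case: (eqVneq z a) => [->|_] /=; rewrite ?(negbTE ab).
have [Q1 sQ1] := exists_swap aP wP.
have hPQ1 := token_relI eaw sQ1.
have [wb|wb] := eqVneq w b; first by exists Q1; [rewrite -wb | apply: connect1].
have [_ _ wQ1 _ _] := sQ1.
have bQ1 : b \notin val Q1.
  by rewrite (in_swap b sQ1) eq_sym (negbTE wb) (negbTE bP) andbF.
have [Q2 sQ2 cQ2] := IH w Q1 pw wQ1 bQ1.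
exists Q2; last exact: connect_trans (connect1 hPQ1) cQ2.
by apply: swap_trans sQ1 sQ2 _; rewrite eq_sym.
Qed.

Lemma token_connected : connected_graph e -> connected_graph h.
Proof.
move=> e_conn P Q; move cardPQ : #|val P :\: val Q| => n.
elim: n P cardPQ => [|n IH] P cardPQ.
  apply/eq_connect0/val_inj/eqP; rewrite eqEcard !token_card leqnn andbT.
  by rewrite -setD_eq0 -cards_eq0 cardPQ.
have [a] : exists a, a \in val P :\: val Q by apply/set0Pn; rewrite -card_gt0 cardPQ.
have cardQP : #|val Q :\: val P| = #|val P :\: val Q|.
  by rewrite !cardsD setIC !token_card.
have [b] : exists b, b \in val Q :\: val P.
  by apply/set0Pn; rewrite -card_gt0 cardQP cardPQ.
rewrite !inE => /andP [bP bQ] /andP [aQ aP].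
have /connectP [p pab lastE] := e_conn a b.
have [Q1 sQ1 cPQ1] := connect_swap pab aP ltac:(by rewrite -lastE).
apply: connect_trans cPQ1 (IH Q1 _).
have -> : val Q1 :\: val Q = (val P :\: val Q) :\ a.
  apply/setP => z; rewrite !inE (in_swap z sQ1) -lastE.
  by case: (eqVneq z b) => [->|_] /=; [rewrite bQ andbF | rewrite andbCA].
by move: cardPQ; rewrite (cardsD1 a) !inE aQ aP => -[].
Qed.

End TokenGraph.

Section ProductColouring.
Variables (V : finType) (e : rel V) (k : nat).
Hypotheses (e_sym : symmetric e) (e_irr : irreflexive e) (e_free : C4_diamond_free e).
Hypothesis e_conn : connected_graph e.
Local Notation T := (tokens V k).
Local Notation h := (token_rel e k).
Variables (V1 V2 : finType) (e1 : rel V1) (e2 : rel V2).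
Hypotheses (simple1 : simple_graph e1) (simple2 : simple_graph e2).
Variables (f : T -> V1 * V2) (g : V1 * V2 -> T).
Hypotheses (fK : cancel f g) (gK : cancel g f).
Hypothesis h_cart : forall P Q, h P Q = cart_rel e1 e2 (f P) (f Q).
Implicit Types (P Q R S : T) (s t x y : V).

Definition colour P Q := (f P).1 == (f Q).1.

Lemma colourC P Q : colour P Q = colour Q P.
Proof. exact: eq_sym. Qed.

Lemma token_corner_square P Q R : h P Q -> h P R -> colour P Q != colour P R ->
  ~~ h Q R /\ exists2 S, S != P & h Q S && h S R.
Proof.
rewrite !h_cart => hQ hR hc.
have [nQR [s sP /andP [Qs sR]]] := cart_corner_square simple1 simple2 hQ hR hc.
split=> //; exists (g s); first by apply: contraNneq sP => <-; rewrite gK.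
by rewrite !h_cart gK Qs sR.
Qed.

Lemma token_square_colour P Q R S : h P Q -> h Q S -> h R S -> h P R ->
  P != S -> Q != R -> colour P R = colour Q S.
Proof.
rewrite !h_cart => hPQ hQS hRS hPR PS QR.
by apply: (cart_square_fst simple1 simple2 hPQ hQS hRS hPR); rewrite (inj_eq (can_inj fK)).
Qed.

Lemma colour_same_src P Q R x y y' :
  swap (val P) (val Q) x y -> swap (val P) (val R) x y' -> e x y -> e x y' ->
  colour P Q = colour P R.
Proof.
move=> sQ sR exy exy'.
have [yy'|yy'] := eqVneq y y'.
  by subst y'; rewrite (val_inj (swap_uniq sQ sR)).
have [//|hc] := eqVneq (colour P Q) (colour P R).
have [nQR [S SP /andP [hQS hSR]]] :=
  token_corner_square (token_relI exy sQ) (token_relI exy' sR) hc.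
have [eyy'|nyy'] := boolP (e y y').
  by rewrite (token_relI eyy' (swap_same_src sQ sR yy')) in nQR.
have [a [b [eab sQS]]] := token_relE e_sym e_irr hQS.
have [c [d [ecd sSR]]] := token_relE e_sym e_irr hSR.
case/negP: SP; apply/eqP/val_inj.
exact: (swap_common_neighbour_src e_sym e_irr e_free sQ sR yy' nyy' exy exy'
  sQS eab sSR ecd).
Qed.

Lemma colour_same_tgt P Q R x x' y :
  swap (val P) (val Q) x y -> swap (val P) (val R) x' y -> e x y -> e x' y ->
  colour P Q = colour P R.
Proof.
move=> sQ sR exy ex'y.
have [xx'|xx'] := eqVneq x x'.
  by subst x'; rewrite (val_inj (swap_uniq sQ sR)).
have [//|hc] := eqVneq (colour P Q) (colour P R).
have [nQR [S SP /andP [hQS hSR]]] :=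
  token_corner_square (token_relI exy sQ) (token_relI ex'y sR) hc.
have [exx'|nxx'] := boolP (e x x').
  have ex'x : e x' x by rewrite e_sym.
  by rewrite (token_relI ex'x (swap_same_tgt sQ sR xx')) in nQR.
have [a [b [eab sQS]]] := token_relE e_sym e_irr hQS.
have [c [d [ecd sSR]]] := token_relE e_sym e_irr hSR.
case/negP: SP; apply/eqP/val_inj.
exact: (swap_common_neighbour_tgt e_sym e_irr e_free sQ sR xx' nxx' exy ex'y
  sQS eab sSR ecd).
Qed.

Lemma colourE P Q : h P Q -> colour P Q = ((f P).2 != (f Q).2).
Proof. by move=> hPQ; rewrite /colour (cart_rel_fst simple1 simple2) // -h_cart. Qed.

Definition bicoloured P s t x y := exists Q R,
  [/\ swap (val P) (val Q) s t, swap (val P) (val R) x y, e s t, e x y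
    & colour P Q != colour P R].

Lemma bicoloured_disjoint P s t x y : bicoloured P s t x y -> s != x /\ t != y.
Proof.
case=> Q [R [sQ sR est exy hc]]; split.
  by apply: contraNneq hc => sx; subst x; rewrite (colour_same_src sQ sR est exy).
by apply: contraNneq hc => ty; subst y; rewrite (colour_same_tgt sQ sR est exy).
Qed.

Lemma bicoloured_flip P s t x y : bicoloured P s t x y ->
  exists2 Q, swap (val P) (val Q) s t & bicoloured Q t s x y.
Proof.
move=> B; have [sx ty] := bicoloured_disjoint B.
case: B => Q [R [sQ sR est exy hc]].
have [sP _ _ _ _] := sQ; have [xP xR _ yP _] := sR.
have xQ : x \in val Q by rewrite (in_swap x sQ) (eq_sym x s) sx xP orbT.
have yQ : y \notin val Q.
  by rewrite (in_swap y sQ) eq_sym (negbTE ty) (negbTE yP) andbF.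
have [R' sR'] := exists_swap xQ yQ.
have sRR' := swap_square sQ sR sR' sx ty.
have PR' : P != R' by apply: contraTneq sP => ->; have [] := sRR'.
have QR : Q != R by apply: contraTneq xQ => ->.
have colQR' : colour P R = colour Q R'.
  exact: token_square_colour (token_relI est sQ) (token_relI exy sR')
    (token_relI est sRR') (token_relI exy sR) PR' QR.
exists Q => //; exists P, R'; split => //.
- exact: swap_sym.
- by rewrite e_sym.
- by rewrite -colQR' colourC.
Qed.

Lemma bicoloured_move_src P s t x y w :
  bicoloured P s t x y -> e s w -> w \notin val P -> bicoloured P s w x y.
Proof.
case=> Q [R [sQ sR est exy hc]] esw wP; have [sP _ _ _ _] := sQ.
have [Q' sQ'] := exists_swap sP wP.
by exists Q', R; rewrite -(colour_same_src sQ sQ' est esw).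
Qed.

Lemma bicoloured_move_tgt P s t x y w :
  bicoloured P s t x y -> e w t -> w \in val P -> bicoloured P w t x y.
Proof.
case=> Q [R [sQ sR est exy hc]] ewt wP; have [_ _ _ tP _] := sQ.
have [Q' sQ'] := exists_swap wP tP.
by exists Q', R; rewrite -(colour_same_tgt sQ sQ' est ewt).
Qed.

Definition on_bicoloured x y u :=
  exists P s t, bicoloured P s t x y /\ u \in [:: s; t].

Lemma on_bicoloured_step x y u w :
  on_bicoloured x y u -> e u w -> on_bicoloured x y w.
Proof.
have src P s t : bicoloured P s t x y -> e s w -> on_bicoloured x y w.
  move=> B esw; have sw := edge_neq e_irr esw.
  have [wP|wP] := boolP (w \in val P); last first.
    exists P, s, w; split; first exact: bicoloured_move_src B esw wP.
    by rewrite !inE eqxx orbT.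
  have [Q sQ BQ] := bicoloured_flip B.
  have wQ : w \in val Q by rewrite (in_swap w sQ) (eq_sym w s) sw wP orbT.
  exists Q, w, s; split; last by rewrite !inE eqxx.
  by apply: bicoloured_move_tgt BQ _ wQ; rewrite e_sym.
case=> P [s [t [B]]]; rewrite !inE => /orP [] /eqP -> eu; first exact: src B eu.
by have [Q _ BQ] := bicoloured_flip B; apply: src BQ eu.
Qed.

Lemma bicoloured_not_on P s t x y : bicoloured P s t x y -> x \notin [:: s; t].
Proof.
move=> B; have [sx _] := bicoloured_disjoint B.
case: B => Q [R [sQ sR _ _ _]]; have [_ _ _ tP _] := sQ; have [xP _ _ _ _] := sR.
by rewrite !inE negb_or eq_sym sx; apply: contraTneq xP => ->.
Qed.

Lemma colour_const P Q R : h P Q -> h P R -> colour P Q = colour P R.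
Proof.
move=> hQ hR; have [//|hc] := eqVneq (colour P Q) (colour P R).
have [s [t [est sQ]]] := token_relE e_sym e_irr hQ.
have [x [y [exy sR]]] := token_relE e_sym e_irr hR.
have : on_bicoloured x y x.
  apply: (connect_invariant (@on_bicoloured_step x y) (e_conn s x)).
  by exists P, s, t; rewrite !inE eqxx; split=> //; exists Q, R.
by case=> P' [s' [t' [B' xst]]]; case/negP: (bicoloured_not_on B').
Qed.

Lemma colour_uniform P Q R S : h P Q -> h R S -> colour P Q = colour R S.
Proof.
move=> hPQ hRS.
pose I X := forall Z, h X Z -> colour X Z = colour P Q.
have IQ : I Q.
  move=> Z hQZ; have hQP : h Q P by rewrite (token_relC e_sym).
  by rewrite (colour_const hQZ hQP) colourC.
suff /(_ S hRS) : I R by [].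
apply: (connect_invariant (I := I) _ (token_connected e_irr e_conn Q R) IQ).
move=> u w Iu huw Z hwZ; have hwu : h w u by rewrite (token_relC e_sym).
by rewrite (colour_const hwZ hwu) colourC; apply: Iu.
Qed.

Lemma connect_fixes_coord P Q Z : h P Z -> connect h P Q ->
  if colour P Z then (f Q).1 = (f P).1 else (f Q).2 = (f P).2.
Proof.
move=> hPZ PQ.
pose I X := if colour P Z then (f X).1 = (f P).1 else (f X).2 = (f P).2.
apply: (connect_invariant (I := I) _ PQ); last by rewrite /I; case: ifP.
move=> u w + huw; rewrite /I -(colour_uniform huw hPZ).
case: ifP => [/eqP <- // | /negbT].
by rewrite (colourE huw) negbK => /eqP <-.
Qed.

End ProductColouring.

Theorem corollary27 (V : finType) (e : rel V) (k : nat) :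
  simple_graph e -> connected_graph e -> C4_diamond_free e ->
  1 <= k <= #|V| - 1 ->
  prime_graph (token_rel e k).
Proof.
move=> [e_sym e_irr] e_conn e_free _.
move=> [V1 [V2 [e1 [e2 [simple1 [simple2 [c1 [c2 [f [[g fK gK] h_cart]]]]]]]]]].
have [a1 [a2 [_ _ a12]]] := card_gt1P c1.
have [b1 [b2 [_ _ b12]]] := card_gt1P c2.
have h_conn : connected_graph (token_rel e k) := token_connected e_irr e_conn.
have /connectP [[|Z p] /= pPZ QE] := h_conn (g (a1, b1)) (g (a2, b2)).
  by move/(congr1 f): QE; rewrite !gK => -[/eqP]; rewrite eq_sym (negbTE a12).
case/andP: pPZ => hPZ _.
have := connect_fixes_coord e_sym e_irr e_free e_conn simple1 simple2 fK gK h_cart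
  hPZ (h_conn _ (g (a2, b2))).
by rewrite !gK; case: ifP => _ /= /esym/eqP; rewrite ?(negbTE a12) ?(negbTE b12).
Qed.
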